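(* Let $(\tau_i,u_i)_{i\in\mathbb Z}$ be a $C^1$-in-time solution of scheme (H) with $\tau_i>0$, and $(\bar\tau_i,\bar u_i)_{i\in\mathbb Z}$ a $C^1$-in-time solution of scheme (P) with $\bar\tau_i>0$ (same $\lambda$, $\sigma$, $\Delta x$). Then for every $i\in\mathbb Z$, $$\frac{d\eta_i^\varepsilon}{dt}+\frac{1}{\Delta x}(\psi_{i+1/2}-\psi_{i-1/2})=-\sigma(u_i-\bar u_i)^2+\frac1\sigma\,\frac{p(\bar\tau_{i+2})-2p(\bar\tau_i)+p(\bar\tau_{i-2})}{(2\Delta x)^2}\,p(\tau_i|\bar\tau_i)+\frac{\varepsilon^2}{\sigma}(u_i-\bar u_i)\frac{d}{dt}\Big(\frac{p(\bar\tau_{i+1})-p(\bar\tau_{i-1})}{2\Delta x}\Big)+R_i^u+R_i^\tau,$$ where $\psi_{i+1/2}=\frac12(u_i-\bar u_i)(p(\tau_{i+1})-p(\bar\tau_{i+1}))+\frac12(u_{i+1}-\bar u_{i+1})(p(\tau_i)-p(\bar\tau_i))$, $R_i^u=\frac{\lambda\varepsilon^2}{2\Delta x}(u_i-\bar u_i)(u_{i+1}-2u_i+u_{i-1})$, $R_i^\tau=-\frac{\lambda}{2\Delta x}\Big((p(\tau_i)-p(\bar\tau_i))(\tau_{i+1}-2\tau_i+\tau_{i-1})-(\tau_i-\bar\tau_i)p'(\bar\tau_i)(\bar\tau_{i+1}-2\bar\tau_i+\bar\tau_{i-1})\Big)$.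
   Context: The pressure $p\in C^2((0,\infty))$ satisfies $p>0$, $p'<0$. Fix $\tau_\star>0$, $P(\tau)=\int_{\tau_\star}^\tau p(s)ds$, $P(\tau|\bar\tau)=P(\tau)-P(\bar\tau)-p(\bar\tau)(\tau-\bar\tau)$, $p(\tau|\bar\tau)=p(\tau)-p(\bar\tau)-p'(\bar\tau)(\tau-\bar\tau)$. Parameters $\varepsilon,\sigma,\Delta x,\lambda>0$. Scheme (H): $\frac{d}{dt}\tau_i=\frac{1}{2\Delta x}(u_{i+1}-u_{i-1})+\frac{\lambda}{2\Delta x}(\tau_{i+1}-2\tau_i+\tau_{i-1})$, $\frac{d}{dt}u_i=\frac{\lambda}{2\Delta x}(u_{i+1}-2u_i+u_{i-1})-\frac{1}{2\varepsilon^2\Delta x}(p(\tau_{i+1})-p(\tau_{i-1}))-\frac{\sigma}{\varepsilon^2}u_i$. Scheme (P): $\frac{d}{dt}\bar\tau_i=\frac{1}{2\Delta x}(\bar u_{i+1}-\bar u_{i-1})+\frac{\lambda}{2\Delta x}(\bar\tau_{i+1}-2\bar\tau_i+\bar\tau_{i-1})$, $\sigma\bar u_i=-\frac{p(\bar\tau_{i+1})-p(\bar\tau_{i-1})}{2\Delta x}$. Discrete relative entropy $\eta_i^\varepsilon=\frac{\varepsilon^2}{2}(u_i-\bar u_i)^2-P(\tau_i|\bar\tau_i)$. *)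

From Stdlib Require Import Reals Lra ZArith ClassicalEpsilon.
Open Scope R_scope.

(* Riemann integral int_a^b f (oriented, as in Stdlib's RiemannInt, which is
   independent of the integrability proof by RiemannInt_P5);
   defaults to 0 if f is not Riemann integrable between a and b
   (never used in that case: p is continuous on (0,oo)). *)
Definition Rint (f : R -> R) (a b : R) : R :=
  match excluded_middle_informative (inhabited (Riemann_integrable f a b)) with
  | left H => RiemannInt (epsilon H (fun _ => True))
  | right _ => 0
  end.

Definition Pot (p : R -> R) (tau_star tau : R) : R := Rint p tau_star tau.

Definition Prel (p : R -> R) (tau_star tau taubar : R) : R :=
  Pot p tau_star tau - Pot p tau_star taubar - p taubar * (tau - taubar).

Definition prel (p dp : R -> R) (tau taubar : R) : R :=
  p tau - p taubar - dp taubar * (tau - taubar).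

Definition eta (p : R -> R) (tau_star eps : R)
  (tau u taubar ubar : Z -> R -> R) (i : Z) (t : R) : R :=
  eps ^ 2 / 2 * (u i t - ubar i t) ^ 2 - Prel p tau_star (tau i t) (taubar i t).

Definition psi (p : R -> R) (tau u taubar ubar : Z -> R -> R) (i : Z) (t : R) : R :=
  / 2 * (u i t - ubar i t) * (p (tau (i+1)%Z t) - p (taubar (i+1)%Z t))
  + / 2 * (u (i+1)%Z t - ubar (i+1)%Z t) * (p (tau i t) - p (taubar i t)).

(* The balance law is an algebraic identity at each time.  Since P is a primitive of p,
   d/dt P(tau|taubar) = (p(tau) - p(taubar)) tau' - p'(taubar)(tau - taubar) taubar'.
   Inserting the right-hand sides of (H) and (P) and eliminating every ubar_j through
   Darcy's law sigma ubar_j = -(p(taubar_{j+1}) - p(taubar_{j-1}))/(2 dx) leaves an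
   identity of rational functions; the time derivative of the discrete pressure
   gradient is -sigma ubar_i', which is how ubar_i' enters the right-hand side. *)
From Stdlib Require Import Reals ZArith Lra ClassicalEpsilon.
From Coquelicot Require Import Coquelicot.
Open Scope R_scope.

Lemma Rint_eq_RInt (f : R -> R) (a b : R) :
  (forall z, Rmin a b <= z <= Rmax a b -> continuity_pt f z) ->
  Rint f a b = RInt f a b.
Proof.
  intros Hc.
  assert (He : ex_RInt f a b).
  { apply (@ex_RInt_continuous R_CompleteNormedModule).
    intros z Hz. apply continuity_pt_filterlim. now apply Hc. }
  unfold Rint. destruct excluded_middle_informative as [H|H].
  - symmetry. apply RInt_Reals.
  - exfalso. apply H. constructor. now apply ex_RInt_Reals_0.
Qed.

Lemma derivable_pt_lim_ext_open (f g : R -> R) (T0 T1 t l : R) :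
  T0 < t < T1 -> (forall s, T0 < s < T1 -> f s = g s) ->
  derivable_pt_lim g t l -> derivable_pt_lim f t l.
Proof.
  intros Ht Hfg Hg. apply is_derive_Reals.
  apply (is_derive_ext_loc g).
  - apply (filter_imp (fun s => T0 < s < T1)).
    + intros s Hs. symmetry. now apply Hfg.
    + exact (open_and _ _ (open_gt T0) (open_lt T1) t Ht).
  - now apply is_derive_Reals.
Qed.

Lemma derivable_pt_lim_sqr (f : R -> R) (t df : R) :
  derivable_pt_lim f t df ->
  derivable_pt_lim (fun s => f s ^ 2) t (2 * f t * df).
Proof.
  intros Hf.
  replace (2 * f t * df) with (INR 2 * f t ^ 1 * df) by (simpl; ring).
  exact (derivable_pt_lim_comp f (fun y => y ^ 2) t _ _ Hf (derivable_pt_lim_pow _ 2)).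
Qed.

Section RelativePotential.

Variables (p dp : R -> R) (tau_star : R).
Hypothesis Hts : 0 < tau_star.
Hypothesis Hp : forall x, 0 < x -> derivable_pt_lim p x (dp x).

Lemma derivable_pt_lim_Pot (x : R) :
  0 < x -> derivable_pt_lim (Pot p tau_star) x (p x).
Proof.
  intros Hx.
  assert (Hc : forall b, 0 < b -> forall z, Rmin tau_star b <= z <= Rmax tau_star b ->
                 continuity_pt p z).
  { intros b Hb z Hz. apply derivable_continuous_pt. exists (dp z). apply Hp.
    assert (0 < Rmin tau_star b) by (apply Rmin_glb_lt; lra). lra. }
  assert (Hpos : locally x (fun b => 0 < b)) by exact (open_gt 0 x Hx).
  apply is_derive_Reals.
  apply (is_derive_ext_loc (RInt p tau_star)).
  - apply (filter_imp (fun b => 0 < b)); [|exact Hpos].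
    intros b Hb. symmetry. now apply Rint_eq_RInt, Hc.
  - apply (is_derive_RInt p (RInt p tau_star) tau_star x).
    + apply (filter_imp (fun b => 0 < b)); [|exact Hpos].
      intros b Hb. apply (@RInt_correct R_CompleteNormedModule).
      apply (@ex_RInt_continuous R_CompleteNormedModule).
      intros z Hz. apply continuity_pt_filterlim. now apply (Hc b).
    + apply continuity_pt_filterlim, derivable_continuous_pt.
      exists (dp x). now apply Hp.
Qed.

Lemma derivable_pt_lim_Prel (a b : R -> R) (t da db : R) :
  0 < a t -> 0 < b t ->
  derivable_pt_lim a t da -> derivable_pt_lim b t db ->
  derivable_pt_lim (fun s => Prel p tau_star (a s) (b s)) t
    ((p (a t) - p (b t)) * da - dp (b t) * (a t - b t) * db).
Proof.
  intros Ha Hb Hda Hdb. unfold Prel.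
  replace ((p (a t) - p (b t)) * da - dp (b t) * (a t - b t) * db)
    with (p (a t) * da - p (b t) * db
          - (dp (b t) * db * (a t - b t) + p (b t) * (da - db))) by ring.
  apply (derivable_pt_lim_minus (fun s => Pot p tau_star (a s) - Pot p tau_star (b s))
           (fun s => p (b s) * (a s - b s))).
  - apply (derivable_pt_lim_minus (fun s => Pot p tau_star (a s))
             (fun s => Pot p tau_star (b s))).
    + exact (derivable_pt_lim_comp a _ t _ _ Hda (derivable_pt_lim_Pot _ Ha)).
    + exact (derivable_pt_lim_comp b _ t _ _ Hdb (derivable_pt_lim_Pot _ Hb)).
  - apply (derivable_pt_lim_mult (fun s => p (b s)) (fun s => a s - b s)).
    + exact (derivable_pt_lim_comp b p t _ _ Hdb (Hp _ Hb)).
    + now apply (derivable_pt_lim_minus a b).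
Qed.

Lemma derivable_pt_lim_eta (eps : R) (tau u taubar ubar : Z -> R -> R) (i : Z)
    (t dtau du dtaubar dubar : R) :
  0 < tau i t -> 0 < taubar i t ->
  derivable_pt_lim (tau i) t dtau -> derivable_pt_lim (u i) t du ->
  derivable_pt_lim (taubar i) t dtaubar -> derivable_pt_lim (ubar i) t dubar ->
  derivable_pt_lim (eta p tau_star eps tau u taubar ubar i) t
    (eps ^ 2 * (u i t - ubar i t) * (du - dubar)
     - ((p (tau i t) - p (taubar i t)) * dtau
        - dp (taubar i t) * (tau i t - taubar i t) * dtaubar)).
Proof.
  intros Htau Htaubar Hdtau Hdu Hdtaubar Hdubar. unfold eta.
  apply (derivable_pt_lim_minus (fun s => eps ^ 2 / 2 * (u i s - ubar i s) ^ 2)).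
  - replace (eps ^ 2 * (u i t - ubar i t) * (du - dubar))
      with (eps ^ 2 / 2 * (2 * (u i t - ubar i t) * (du - dubar))) by field.
    apply (derivable_pt_lim_scal (fun s => (u i s - ubar i s) ^ 2)).
    apply (derivable_pt_lim_sqr (fun s => u i s - ubar i s)).
    now apply (derivable_pt_lim_minus (u i) (ubar i)).
  - now apply derivable_pt_lim_Prel.
Qed.

End RelativePotential.

Theorem lemma3p2
  (p dp ddp : R -> R) (tau_star eps sigma dx lambda : R)
  (Hts : 0 < tau_star) (Heps : 0 < eps) (Hsig : 0 < sigma)
  (Hdx : 0 < dx) (Hlam : 0 < lambda)
  (* p in C^2((0,oo)), p > 0, p' < 0 *)
  (Hp1 : forall x, 0 < x -> derivable_pt_lim p x (dp x))
  (Hp2 : forall x, 0 < x -> derivable_pt_lim dp x (ddp x))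
  (Hp3 : forall x, 0 < x -> continuity_pt ddp x)
  (Hppos : forall x, 0 < x -> 0 < p x)
  (Hpneg : forall x, 0 < x -> dp x < 0)
  (* time interval (T0, T1) *)
  (T0 T1 : R) (HT : T0 < T1)
  (tau u taubar ubar dtau du dtaubar dubar : Z -> R -> R)
  (* C^1 in time *)
  (Htau_d : forall i t, T0 < t < T1 -> derivable_pt_lim (tau i) t (dtau i t))
  (Hu_d : forall i t, T0 < t < T1 -> derivable_pt_lim (u i) t (du i t))
  (Htaubar_d : forall i t, T0 < t < T1 -> derivable_pt_lim (taubar i) t (dtaubar i t))
  (Hubar_d : forall i t, T0 < t < T1 -> derivable_pt_lim (ubar i) t (dubar i t))
  (Htau_c : forall i t, T0 < t < T1 -> continuity_pt (dtau i) t)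
  (Hu_c : forall i t, T0 < t < T1 -> continuity_pt (du i) t)
  (Htaubar_c : forall i t, T0 < t < T1 -> continuity_pt (dtaubar i) t)
  (Hubar_c : forall i t, T0 < t < T1 -> continuity_pt (dubar i) t)
  (* positivity *)
  (Htau_pos : forall i t, T0 < t < T1 -> 0 < tau i t)
  (Htaubar_pos : forall i t, T0 < t < T1 -> 0 < taubar i t)
  (* scheme (H) *)
  (HH1 : forall i t, T0 < t < T1 ->
     dtau i t = / (2 * dx) * (u (i+1)%Z t - u (i-1)%Z t)
       + lambda / (2 * dx) * (tau (i+1)%Z t - 2 * tau i t + tau (i-1)%Z t))
  (HH2 : forall i t, T0 < t < T1 ->
     du i t = lambda / (2 * dx) * (u (i+1)%Z t - 2 * u i t + u (i-1)%Z t)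
       - / (2 * eps ^ 2 * dx) * (p (tau (i+1)%Z t) - p (tau (i-1)%Z t))
       - sigma / eps ^ 2 * u i t)
  (* scheme (P) *)
  (HP1 : forall i t, T0 < t < T1 ->
     dtaubar i t = / (2 * dx) * (ubar (i+1)%Z t - ubar (i-1)%Z t)
       + lambda / (2 * dx) * (taubar (i+1)%Z t - 2 * taubar i t + taubar (i-1)%Z t))
  (HP2 : forall i t, T0 < t < T1 ->
     sigma * ubar i t = - ((p (taubar (i+1)%Z t) - p (taubar (i-1)%Z t)) / (2 * dx)))
  : forall (i : Z) (t : R), T0 < t < T1 ->
    exists deta dg : R,
      derivable_pt_lim (eta p tau_star eps tau u taubar ubar i) t deta /\
      derivable_pt_lim
        (fun s => (p (taubar (i+1)%Z s) - p (taubar (i-1)%Z s)) / (2 * dx)) t dg /\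
      deta + / dx * (psi p tau u taubar ubar i t - psi p tau u taubar ubar (i-1)%Z t)
      = - sigma * (u i t - ubar i t) ^ 2
        + / sigma * ((p (taubar (i+2)%Z t) - 2 * p (taubar i t) + p (taubar (i-2)%Z t))
                     / (2 * dx) ^ 2) * prel p dp (tau i t) (taubar i t)
        + eps ^ 2 / sigma * (u i t - ubar i t) * dg
        + lambda * eps ^ 2 / (2 * dx) * (u i t - ubar i t)
            * (u (i+1)%Z t - 2 * u i t + u (i-1)%Z t)
        - lambda / (2 * dx) *
            ((p (tau i t) - p (taubar i t)) * (tau (i+1)%Z t - 2 * tau i t + tau (i-1)%Z t)
             - (tau i t - taubar i t) * dp (taubar i t)
               * (taubar (i+1)%Z t - 2 * taubar i t + taubar (i-1)%Z t)).
Proof.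
  intros i t Ht.
  assert (Hsig0 : sigma <> 0) by lra.
  assert (Hubar : forall j, ubar j t
            = - ((p (taubar (j+1)%Z t) - p (taubar (j-1)%Z t)) / (2 * dx)) / sigma).
  { intros j. rewrite <- (HP2 j t Ht). field. exact Hsig0. }
  exists (eps ^ 2 * (u i t - ubar i t) * (du i t - dubar i t)
          - ((p (tau i t) - p (taubar i t)) * dtau i t
             - dp (taubar i t) * (tau i t - taubar i t) * dtaubar i t)),
         (- sigma * dubar i t).
  split; [|split].
  - apply (derivable_pt_lim_eta p dp tau_star Hts Hp1); auto.
  - apply (derivable_pt_lim_ext_open _ (fun s => - sigma * ubar i s) T0 T1); auto.
    + intros s Hs. rewrite <- Ropp_mult_distr_l, HP2 by exact Hs. ring.
    + now apply (derivable_pt_lim_scal (ubar i)), Hubar_d.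
  - unfold psi, prel.
    rewrite (HH1 i t Ht), (HH2 i t Ht), (HP1 i t Ht), !Hubar.
    replace (i - 1 + 1)%Z with i by ring.
    replace (i + 1 + 1)%Z with (i + 2)%Z by ring.
    replace (i + 1 - 1)%Z with i by ring.
    replace (i - 1 - 1)%Z with (i - 2)%Z by ring.
    field. split; lra.

Qed.
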